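(* Let $\alpha,\beta,c\in\mathbb{C}$, $\ell(x,y)=\alpha x+\beta y$, and let $C(x,y)$ be a quadratic polynomial. For the pencil $\mathfrak E$ consisting of the conics $$\mathcal E_\lambda:\quad C(x,y)-\lambda\big(c^2-\ell^2(x,y)\big)=0,$$ the involution $I_{\mathfrak E,B_\infty}$ with $B_\infty=[-\beta:\alpha:0]$ is an affine map of $\mathbb{C}^2$.
   Context: For a nonsingular conic $\mathcal E$ and a point $B\notin\mathcal E$ of $\mathbb{C}P^2$ (possibly at infinity), $I_{\mathcal E,B}:\mathcal E\to\mathcal E$ sends $P$ to the second intersection point of $\mathcal E$ with the line $(BP)$. For a pencil $\mathfrak E=\{\mathcal E_\lambda\}$ of conics, the $B$-switch $I_{\mathfrak E,B}:\mathbb{C}^2\dashrightarrow\mathbb{C}^2$ sends a non-base point $P$ to $I_{\mathcal E_\lambda,B}(P)$, where $\mathcal E_\lambda$ is the unique conic of the pencil through $P$. *)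

From mathcomp Require Import all_boot all_algebra.
From mathcomp Require Export reals complex.
Set Implicit Arguments. Unset Strict Implicit. Unset Printing Implicit Defensive.
Import GRing.Theory.
Local Open Scope ring_scope.

(* A conic of CP^2 given by its (homogenized) equation
   a x^2 + b x y + c y^2 + d x z + e y z + f z^2 = 0;
   in affine coordinates (z = 1) this is the quadratic polynomial
   a x^2 + b x y + c y^2 + d x + e y + f. *)
Record conic (K : fieldType) := Conic {
  ca : K; cb : K; cc : K; cd : K; ce : K; cf : K }.

Definition hom_eval (K : fieldType) (F : conic K) (x y z : K) : K :=
  ca F * x ^+ 2 + cb F * x * y + cc F * y ^+ 2
  + cd F * x * z + ce F * y * z + cf F * z ^+ 2.

Definition aff_eval (K : fieldType) (F : conic K) (x y : K) : K :=
  hom_eval F x y 1.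

Definition on_conic (K : fieldType) (F : conic K) (x y z : K) : Prop :=
  hom_eval F x y z = 0.

(* The pencil  E_lam :  C(x,y) - lam (c^2 - (al x + be y)^2) = 0. *)
Definition pencil (K : fieldType) (C : conic K) (al be c lam : K) : conic K :=
  Conic (ca C + lam * al ^+ 2) (cb C + lam * (2%:R * al * be))
        (cc C + lam * be ^+ 2) (cd C) (ce C) (cf C - lam * c ^+ 2).

(* I_{F,B}(P) = Q for the point at infinity B = [u : v : 0] and the affine
   point P = (x, y) of F:  the line (BP) is  {[x + s u : y + s v : 1]} u {B};
   F restricted to it is a quadratic in s with a root at s = 0 (the point P)
   and leading coefficient F(B) <> 0, and Q = P + s0 (u, v) where s0 is the
   other root (counted with multiplicity, so Q = P in the tangent case). *)
Definition second_point_inf (K : fieldType) (F : conic K) (u v : K)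
    (P Q : K * K) : Prop :=
  exists s0 : K,
    Q = (P.1 + s0 * u, P.2 + s0 * v) /\
    exists a2 : K, a2 != 0 /\
      forall s : K, aff_eval F (P.1 + s * u) (P.2 + s * v) = a2 * s * (s - s0).

(** Along the direction [B_inf = [u : v : 0]] with [al u + be v = 0] the linear form
    [l] is constant, so on the line through [P] in that direction all members of the
    pencil differ by a constant.  Their restrictions [q s^2 + D s] therefore have the
    same leading coefficient [q = C(u, v)] and the same linear coefficient [D], the
    derivative of [C] at [P] in direction [(u, v)].  The second intersection point is
    [P + s0 (u, v)] with [s0 = - D / q], and [D] is affine in [P]. *)

From mathcomp Require Import all_boot all_algebra.
From mathcomp Require Import reals complex.
From mathcomp Require Import ring.
Set Implicit Arguments. Unset Strict Implicit. Unset Printing Implicit Defensive.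
Import GRing.Theory.
Local Open Scope ring_scope.

Section SecondPointAtInfinity.

Variables (K : fieldType) (F : conic K) (u v : K).

Definition aff_deriv (x y : K) : K :=
  (2%:R * ca F * x + cb F * y + cd F) * u + (cb F * x + 2%:R * cc F * y + ce F) * v.

Definition switch_inf (P : K * K) : K * K :=
  let s0 := - (aff_deriv P.1 P.2 / hom_eval F u v 0) in
  (P.1 + s0 * u, P.2 + s0 * v).

Lemma aff_eval_line (x y s : K) :
  aff_eval F (x + s * u) (y + s * v) =
  aff_eval F x y + s * aff_deriv x y + s ^+ 2 * hom_eval F u v 0.
Proof. by rewrite /aff_eval /hom_eval /aff_deriv; ring. Qed.

Lemma second_point_switch_inf (P : K * K) :
  hom_eval F u v 0 != 0 -> aff_eval F P.1 P.2 = 0 ->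
  second_point_inf F u v P (switch_inf P).
Proof.
move=> q_neq0 PF; eexists; split; first reflexivity.
exists (hom_eval F u v 0); split => // s.
by rewrite aff_eval_line PF add0r; field.
Qed.

Lemma switch_inf_affine :
  exists (m11 m12 m21 m22 v1 v2 : K), forall x y : K,
    switch_inf (x, y) = (m11 * x + m12 * y + v1, m21 * x + m22 * y + v2).
Proof.
set q := hom_eval F u v 0.
set k1 := - ((2%:R * ca F * u + cb F * v) / q).
set k2 := - ((cb F * u + 2%:R * cc F * v) / q).
set k3 := - ((cd F * u + ce F * v) / q).
exists (1 + k1 * u), (k2 * u), (k1 * v), (1 + k2 * v), (k3 * u), (k3 * v).
by move=> x y; rewrite /switch_inf /aff_deriv /= -/q /k1 /k2 /k3; congr pair; ring.
Qed.

End SecondPointAtInfinity.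

Section PencilAlongKernel.

Variables (K : fieldType) (C : conic K) (al be c lam u v : K).
Hypothesis l_uv0 : al * u + be * v = 0.

Lemma pencil_hom_eval_inf :
  hom_eval (pencil C al be c lam) u v 0 = hom_eval C u v 0.
Proof.
apply/eqP; rewrite -subr_eq0; apply/eqP.
transitivity (lam * (al * u + be * v) ^+ 2); first by rewrite /hom_eval /=; ring.
by rewrite l_uv0 expr0n mulr0.
Qed.

Lemma pencil_aff_deriv (x y : K) :
  aff_deriv (pencil C al be c lam) u v x y = aff_deriv C u v x y.
Proof.
apply/eqP; rewrite -subr_eq0; apply/eqP.
transitivity (2%:R * lam * (al * x + be * y) * (al * u + be * v)).
  by rewrite /aff_deriv /=; ring.
by rewrite l_uv0 mulr0.
Qed.

Lemma switch_inf_pencil (P : K * K) :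
  switch_inf (pencil C al be c lam) u v P = switch_inf C u v P.
Proof. by rewrite /switch_inf pencil_hom_eval_inf pencil_aff_deriv. Qed.

End PencilAlongKernel.

Theorem corollary1 (R : realType) (al be c : R[i]) (C : conic R[i]) :
  (al, be) != (0, 0) ->
  (forall lam : R[i], ~ on_conic (pencil C al be c lam) (- be) al 0) ->
  exists (m11 m12 m21 m22 v1 v2 : R[i]),
    forall x y : R[i],
      c ^+ 2 - (al * x + be * y) ^+ 2 != 0 ->
      forall lam : R[i],
        aff_eval (pencil C al be c lam) x y = 0 ->
        second_point_inf (pencil C al be c lam) (- be) al (x, y)
          (m11 * x + m12 * y + v1, m21 * x + m22 * y + v2).
Proof.
move=> _ B_off_pencil.
have l_B0 : al * - be + be * al = 0 by ring.
have qC_neq0 : hom_eval C (- be) al 0 != 0.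
  by apply/eqP; rewrite -(pencil_hom_eval_inf C c 0 l_B0); apply: B_off_pencil.
have [m11 [m12 [m21 [m22 [v1 [v2 switchE]]]]]] := switch_inf_affine C (- be) al.
exists m11, m12, m21, m22, v1, v2 => x y _ lam PE.
rewrite -switchE -(switch_inf_pencil C c lam l_B0 (x, y)).
apply: second_point_switch_inf => //.
by rewrite (pencil_hom_eval_inf _ _ _ l_B0).
Qed.
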